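(* Assume that $d_k^2 < 2p_{k+1}$ for every $k\geq 1$. Then for every integer $N\geq 1$ there is a prime $p$ with $N^2 < p < (N+1)^2$.
   Context: $p_k$ denotes the $k$th prime ($p_1=2$) and $d_k := p_{k+1}-p_k$. *)

From mathcomp Require Import all_boot.
Set Implicit Arguments. Unset Strict Implicit. Unset Printing Implicit Defensive.

Lemma next_prime_ex (n : nat) : exists q, (n < q) && prime q.
Proof. case: (prime_above n) => q Hq Pq; exists q; by rewrite Hq Pq. Qed.

Definition next_prime (n : nat) : nat := ex_minn (next_prime_ex n).

(* nth_prime k = p_k, with p_1 = 2 (1-indexed); nth_prime 0 is junk (= 2). *)
Fixpoint nth_prime (k : nat) : nat :=
  match k with
  | 0 | 1 => 2
  | k'.+1 => next_prime (nth_prime k')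
  end.

Definition prime_gap (k : nat) : nat := nth_prime k.+1 - nth_prime k.

From mathcomp Require Import all_boot.
From mathcomp Require Import zify.

(* Let p_k <= N^2 < p_(k+1). If there were no prime in (N^2, (N+1)^2), then
   d_k >= p_(k+1) - N^2 >= 2N + 1, and a gap that large already satisfies
   d_k^2 >= 2 p_(k+1), contradicting the hypothesis. *)

Lemma next_primeP (n : nat) : n < next_prime n /\ prime (next_prime n).
Proof. by rewrite /next_prime; case: ex_minnP => q /andP[]. Qed.

Lemma prime_nth_prime (k : nat) : prime (nth_prime k).
Proof. by case: k => [|[|k]] //=; case: (next_primeP (nth_prime k.+1)). Qed.

Lemma nth_prime_bracket (m : nat) : 2 <= m ->
  exists2 k, 0 < k & nth_prime k <= m < nth_prime k.+1.
Proof.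
elim: m => // m IHm; rewrite leq_eqVlt => /predU1P[<- | m_ge2].
  by exists 1 => //=; case: (next_primeP 2).
have [k k_gt0 /andP[pk_le_m m_lt_pk1]] := IHm m_ge2.
have [pk1_eq | m1_lt_pk1] := eqVneq m.+1 (nth_prime k.+1).
  exists k.+1 => //; rewrite pk1_eq leqnn /=.
  exact: (next_primeP _).1.
by exists k => //; rewrite ltn_neqAle m1_lt_pk1 m_lt_pk1 leqW.
Qed.

Lemma double_le_sqr_gap (N p q : nat) :
  0 < N -> p <= N ^ 2 -> N.+1 ^ 2 <= q -> 2 * q <= (q - p) ^ 2.
Proof.
move=> N_gt0 p_le q_ge.
have gap_ge : q - N ^ 2 <= q - p by rewrite leq_sub2l.
rewrite (leq_trans _ (_ : (q - N ^ 2) ^ 2 <= _)) ?leq_sqr //.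
move: q_ge; rewrite !expnS !expn0 !muln1 => q_ge.
have [a -> a_ge] : exists2 a, q = a + N * N & 2 * N + 1 <= a by exists (q - N * N); lia.
rewrite addnK; nia.
Qed.

Theorem theorem2p3 :
  (forall k : nat, 1 <= k -> (prime_gap k) ^ 2 < 2 * nth_prime k.+1) ->
  forall N : nat, 1 <= N ->
    exists p : nat, [/\ prime p, N ^ 2 < p & p < N.+1 ^ 2].
Proof.
move=> small_gaps [|[|N]] // _; first by exists 2.
have sqr_ge2 : 2 <= N.+2 ^ 2 by lia.
have [k k_gt0 /andP[pk_le pk1_gt]] := nth_prime_bracket _ sqr_ge2.
exists (nth_prime k.+1); split; rewrite ?prime_nth_prime //.
rewrite ltnNge; apply/negP => pk1_ge.
have := small_gaps k k_gt0; rewrite /prime_gap ltnNge.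
by rewrite (double_le_sqr_gap _ _ _ (ltn0Sn N.+1) pk_le pk1_ge).
Qed.
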